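(* Let $G$ be a finite simple graph and let $q \ge p \ge 0$ be integers. Then $\alpha_q(G) \le \left\lceil \frac{q+1}{p+1} \right\rceil \alpha_p(G)$.
   Context: For a graph $G=(V,E)$ and an integer $k\ge 0$, a $k$-independent set is a set $S\subseteq V$ such that the induced subgraph $G[S]$ has maximum degree at most $k$; $\alpha_k(G)$ denotes the maximum cardinality of a $k$-independent set of $G$ (so $\alpha_0(G)$ is the usual independence number). *)

From mathcomp Require Import all_boot.
Set Implicit Arguments. Unset Strict Implicit. Unset Printing Implicit Defensive.

Definition simple_graph (T : finType) (e : rel T) : Prop :=
  symmetric e /\ irreflexive e.

Definition k_independent (T : finType) (e : rel T) (k : nat) (S : {set T}) : bool :=
  [forall x in S, #|[set y in S | e x y]| <= k].

(* alpha_k(G): maximum cardinality of a k-independent set (the empty set is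
   always k-independent, so the max is over a nonempty family). *)
Definition alpha_k (T : finType) (e : rel T) (k : nat) : nat :=
  \max_(S : {set T} | k_independent e k S) #|S|.

Definition ceil_div (m d : nat) : nat := (m + d.-1) %/ d.

From mathcomp Require Import all_boot.
From mathcomp Require Import zify.
Set Implicit Arguments. Unset Strict Implicit. Unset Printing Implicit Defensive.

(* Proof idea (Lovász's colouring argument).  Put c := ceil((q+1)/(p+1)), so
   that q < c (p+1).  Let S be a q-independent set and colour S with c colours
   so as to minimise the number of monochromatic edges inside S (we count
   [cost], which is twice that number).  If a vertex v had more than p
   neighbours of its own colour, then, since v has at most q < c (p+1)
   neighbours in S, some colour j occurs at most p times among them, and
   recolouring v with j would strictly decrease the cost.  Hence in an optimal
   colouring every colour class is p-independent, so
   |S| = sum of the c class sizes <= c alpha_p(G). *)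

Section Colourings.

Variables (T : finType) (e : rel T).
Hypotheses (e_sym : symmetric e) (e_irr : irreflexive e).
Variables (S : {set T}) (c : nat).

Implicit Types (f : {ffun T -> 'I_c}) (x v : T) (j k : 'I_c).

Definition colour_class f k : {set T} := [set x in S | f x == k].

Definition cdeg f x k : nat := \sum_(y in S) (e x y && (f y == k)).

Definition cost f : nat := \sum_(x in S) cdeg f x (f x).

Definition recolour f v j : {ffun T -> 'I_c} :=
  [ffun z => if z == v then j else f z].

Lemma cdeg_card f x k :
  cdeg f x k = #|[set y in colour_class f k | e x y]|.
Proof.
rewrite /cdeg -sum1_card big_mkcond [RHS]big_mkcond /=.
apply: eq_bigr => y _; rewrite !inE.
by case: (y \in S); case: (f y == k); case: (e x y).
Qed.

Lemma sum_cdeg f x : \sum_(k < c) cdeg f x k = #|[set y in S | e x y]|.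
Proof.
rewrite /cdeg exchange_big /= -sum1_card big_mkcond [RHS]big_mkcond /=.
apply: eq_bigr => y _; rewrite inE; case: (y \in S) => //.
rewrite (bigD1 (f y)) //= eqxx big1 ?addn0; first by case: (e x y).
by move=> k /negbTE kfy; rewrite eq_sym kfy andbF.
Qed.

Lemma sparse_colour f x p :
  #|[set y in S | e x y]| < c * p.+1 -> exists j, cdeg f x j <= p.
Proof.
move=> small; apply/existsP; apply: contraLR small => /existsPn dense.
rewrite -leqNgt -(sum_cdeg f) -[c in c * _]card_ord -sum_nat_const.
by apply: leq_sum => k _; rewrite ltnNge dense.
Qed.

Lemma cdeg_recolour f v j x k : v \in S ->
  cdeg (recolour f v j) x k + (e x v && (f v == k))
  = cdeg f x k + (e x v && (j == k)).
Proof.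
move=> vS; rewrite /cdeg (bigD1 v vS) [X in _ = X + _](bigD1 v vS) /=.
rewrite ffunE eqxx.
under eq_bigr => y /andP[_ /negbTE yv] do rewrite ffunE yv.
by rewrite addnAC [RHS]addnC addnA.
Qed.

Lemma cdeg_other f v k : v \in S ->
  cdeg f v k = \sum_(i in S | i != v) (e i v && (k == f i)).
Proof.
move=> vS; rewrite /cdeg (bigD1 v vS) /= e_irr /=.
by apply: eq_bigr => i _; rewrite e_sym eq_sym.
Qed.

Lemma cost_recolour f v j : v \in S ->
  cost (recolour f v j) + 2 * cdeg f v (f v) = cost f + 2 * cdeg f v j.
Proof.
move=> vS; set f' := recolour f v j.
have f'v : f' v = j by rewrite ffunE eqxx.
have f'i i : i != v -> f' i = f i by move/negbTE=> iv; rewrite ffunE iv.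
have own : cdeg f' v j = cdeg f v j.
  by have := cdeg_recolour f j v j vS; rewrite e_irr /= !addn0.
(* For i <> v only the edge iv can change its contribution; summed over i
   this trades cdeg f v (f v) for cdeg f v j. *)
have others : \sum_(i in S | i != v) cdeg f' i (f' i) + cdeg f v (f v)
            = \sum_(i in S | i != v) cdeg f i (f i) + cdeg f v j.
  rewrite !cdeg_other // -!big_split /=.
  by apply: eq_bigr => i /andP[_ iv]; rewrite f'i //; apply: cdeg_recolour.
have cost_at_v g : cost g = cdeg g v (g v) + \sum_(i in S | i != v) cdeg g i (g i).
  by rewrite /cost (bigD1 v vS).
rewrite !cost_at_v f'v own; lia.
Qed.

Lemma optimal_colouring_sparse f p :
  (forall g, cost f <= cost g) ->
  (forall v, v \in S -> #|[set y in S | e v y]| < c * p.+1) ->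
  forall v, v \in S -> cdeg f v (f v) <= p.
Proof.
move=> fmin small v vS; rewrite leqNgt; apply/negP => dense.
have [j sparse] := sparse_colour f (small v vS).
have := cost_recolour f j vS; have := fmin (recolour f v j).
have : cdeg f v j < cdeg f v (f v) by apply: leq_ltn_trans dense.
lia.
Qed.

Lemma card_colour_classes f : #|S| = \sum_(k < c) #|colour_class f k|.
Proof.
rewrite -sum1_card (partition_big (fun x => f x) xpredT) //=.
by apply: eq_bigr => k _; rewrite -sum1_card; apply: eq_bigl => x; rewrite inE.
Qed.

End Colourings.

Lemma ceil_div_mul q p : q < ceil_div q.+1 p.+1 * p.+1.
Proof.
rewrite /ceil_div /=.
have := divn_eq (q.+1 + p) p.+1; have := ltn_mod (q.+1 + p) p.+1; lia.
Qed.

Lemma split_into_independent (T : finType) (e : rel T) (S : {set T}) p q c :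
  symmetric e -> irreflexive e -> k_independent e q S -> q < c * p.+1 ->
  exists f : {ffun T -> 'I_c},
    forall k, k_independent e p (colour_class S f k).
Proof.
move=> e_sym e_irr /forallP Sq qc.
have c_gt0 : 0 < c by move: qc; case: c.
pose f0 : {ffun T -> 'I_c} := [ffun _ => Ordinal c_gt0].
have [f _ fmin] := @arg_minnP _ f0 xpredT (@cost T e S c) isT.
exists f => k; apply/forallP => x; apply/implyP; rewrite inE => /andP[xS /eqP <-].
rewrite -cdeg_card; apply: (optimal_colouring_sparse e_sym e_irr) => // [g|v vS].
  exact: fmin.
by apply: leq_ltn_trans qc; have := Sq v; rewrite vS.
Qed.

Theorem mainTheorem1 (T : finType) (e : rel T) (p q : nat) :
  simple_graph e -> p <= q ->
  alpha_k e q <= ceil_div q.+1 p.+1 * alpha_k e p.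
Proof.
move=> [e_sym e_irr] _; apply/bigmax_leqP => S Sq.
have [f classes_p] := split_into_independent e_sym e_irr Sq (ceil_div_mul q p).
rewrite (card_colour_classes S f) -[X in _ <= X * _]card_ord -sum_nat_const.
by apply: leq_sum => k _; apply: leq_bigmax_cond.
Qed.
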